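(* Let $\mathcal{G}$ be a connected, homogeneous, bidirected coupled cell network with cell set $\mathcal{C}=\{1,\dots,n\}$ and edge set $\mathcal{E}$, each cell having phase space $\mathbb{R}$. Let $f:\mathbb{R}^n\to\mathbb{R}^n$ be the $\mathcal{G}$-admissible vector field with components \[ f_c(x)=\sum_{d\in I(c)}\phi_{[(c,d)]}(x_d-x_c),\qquad c\in\mathcal{C}, \] where for each edge type $\xi$, $\phi_\xi:\mathbb{R}\to\mathbb{R}$ is an odd $C^1$ function. Suppose there exists $\varepsilon>0$ such that $\alpha\,\phi_\xi(\alpha)>0$ for all $\alpha\in(-\varepsilon,\varepsilon)\setminus\{0\}$ and all edge types $\xi$. Let $\Delta=\{x\in\mathbb{R}^n: x_1=\dots=x_n\}$ and let $\Omega=\{x\in\mathbb{R}^n:\operatorname{dist}(x,\Delta)<r\}$ be the largest open hypercylinder around $\Delta$ such that $x\in\Omega$ implies $|x_d-x_c|<\varepsilon$ for all $(c,d)\in\mathcal{E}$. Then: (i) $\Omega$ is invariant under the flow of $\dot x=f(x)$ (solutions starting in $\Omega$ remain in $\Omega$ for all positive times); (ii) for $x\in\Omega$, $f(x)=0$ if and only if $x\in\Delta$.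
   Context: A coupled cell network consists of cells $\mathcal{C}=\{1,\dots,n\}$, edges $\mathcal{E}\subset\mathcal{C}\times\mathcal{C}$ without loops, and an equivalence relation on edges (edge types; $[e]$ is the type of $e$) compatible with an equivalence relation on cells. The input set of $c$ is the set of edges $(d,c)\in\mathcal{E}$; one writes $d\in I(c)$ when $(d,c)\in\mathcal{E}$. Cells $c,d$ are input equivalent if there is an edge-type preserving bijection between their input sets; the network is homogeneous if all cells are input equivalent. It is bidirected if $(i,j)\in\mathcal{E}$ iff $(j,i)\in\mathcal{E}$, with $(i,j)$ and $(j,i)$ of the same type. Connected means the underlying graph is connected. Admissible maps have components depending only on the cell's own variable and its inputs, with identical functional form across input-equivalent cells, edges of the same type being treated identically. *)

From HB Require Import structures.
From mathcomp Require Import all_boot all_order all_algebra.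
From mathcomp Require Import all_classical all_reals all_analysis.
Set Implicit Arguments. Unset Strict Implicit. Unset Printing Implicit Defensive.
Import Order.TTheory GRing.Theory Num.Theory.
Import numFieldNormedType.Exports.
Local Open Scope classical_set_scope.
Local Open Scope ring_scope.

(* A coupled cell network on cells 'I_n:
   - E d c : bool  means (d,c) is an edge (d is an input of c);
   - ety d c : ET  is the edge type [(d,c)] (label of its equivalence class);
     only meaningful when E d c;
   - cty c : CT    is the cell type (class of the cell equivalence). *)

Definition no_loops n (E : rel 'I_n) := forall c, ~~ E c c.

Definition types_compatible n ET CT (E : rel 'I_n) (ety : 'I_n -> 'I_n -> ET)
  (cty : 'I_n -> CT) :=
  forall d c d' c', E d c -> E d' c' -> ety d c = ety d' c' ->
    cty d = cty d' /\ cty c = cty c'.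

Definition input_equiv n ET (E : rel 'I_n) (ety : 'I_n -> 'I_n -> ET)
  (c c' : 'I_n) :=
  exists g : 'I_n -> 'I_n,
    [/\ forall d, E d c -> E (g d) c' /\ ety (g d) c' = ety d c,
        forall d1 d2, E d1 c -> E d2 c -> g d1 = g d2 -> d1 = d2
      & forall d', E d' c' -> exists2 d, E d c & g d = d'].

Definition homogeneous n ET (E : rel 'I_n) (ety : 'I_n -> 'I_n -> ET) :=
  forall c c', input_equiv E ety c c'.

Definition bidirected n ET (E : rel 'I_n) (ety : 'I_n -> 'I_n -> ET) :=
  forall i j, E i j -> E j i /\ ety i j = ety j i.

Definition connected_net n (E : rel 'I_n) :=
  forall i j : 'I_n, connect [rel a b | E a b || E b a] i j.

Definition diff_field {R : realType} n ET (E : rel 'I_n)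
  (ety : 'I_n -> 'I_n -> ET) (phi : ET -> R -> R) (x : 'I_n -> R) : 'I_n -> R :=
  fun c => \sum_(d < n | E d c) phi (ety c d) (x d - x c).

Definition Delta {R : realType} n : set ('I_n -> R) :=
  [set x | forall i j, x i = x j].

Definition eucl_dist {R : realType} n (x y : 'I_n -> R) : R :=
  Num.sqrt (\sum_(i < n) (x i - y i) ^+ 2).

Definition dist_Delta {R : realType} n (x : 'I_n -> R) : R :=
  inf [set eucl_dist x y | y in @Delta R n].

Definition cyl {R : realType} n (r : \bar R) : set ('I_n -> R) :=
  [set x | ((dist_Delta x)%:E < r)%E].

Definition small_diffs {R : realType} n (E : rel 'I_n) (eps : R) :
  set ('I_n -> R) :=
  [set x | forall c d, E c d -> `|x d - x c| < eps].

(* r is the radius of the largest open hypercylinder around Delta contained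
   in small_diffs E eps (r = +oo allowed, e.g. when there are no edges) *)
Definition largest_cyl_radius {R : realType} n (E : rel 'I_n) (eps : R)
  (r : \bar R) :=
  cyl r `<=` small_diffs E eps /\
  forall r' : \bar R, cyl r' `<=` small_diffs E eps -> (r' <= r)%E.

Definition is_solution {R : realType} n (F : ('I_n -> R) -> ('I_n -> R))
  (a b : R) (x : R -> 'I_n -> R) :=
  forall t, a < t < b -> forall c, is_derive t 1 (fun s => x s c) (F (x t) c).

From HB Require Import structures.
From mathcomp Require Import all_boot all_order all_algebra.
From mathcomp Require Import all_classical all_reals all_analysis.
From mathcomp Require Import ring lra.
Set Implicit Arguments. Unset Strict Implicit.
Import Order.TTheory GRing.Theory Num.Theory.
Import numFieldNormedType.Exports.
Local Open Scope classical_set_scope.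
Local Open Scope ring_scope.

(* Fix a synchronous point y at distance < r from the initial state and take
   W = |x - y|^2 as a Lyapunov function.  Because the network is bidirected
   and the coupling functions are odd, the two ends of each edge contribute
   opposite forces, so dW/dt = -sum_c sum_(d in I(c)) (x_d - x_c) phi(x_d - x_c),
   which is <= 0 as long as all coupled differences stay below eps, i.e. as
   long as x stays in Omega.  A first-exit argument then shows that W never
   exceeds its initial value, so x remains within distance r of Delta.  The
   same sum vanishes at an equilibrium, which forces x_d = x_c along every
   edge, hence x in Delta by connectedness. *)

Lemma sign_mul_ge0 (R : numDomainType) (p : R -> R) (eps a : R) :
  (forall a, 0 < `|a| < eps -> 0 < a * p a) -> `|a| < eps -> 0 <= a * p a.
Proof.
move=> p_sign a_lt; have [->|a_neq0] := eqVneq a 0; first by rewrite mul0r.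
by apply/ltW/p_sign; rewrite normr_gt0 a_neq0.
Qed.

Lemma sign_mul_eq0 (R : numDomainType) (p : R -> R) (eps a : R) :
  (forall a, 0 < `|a| < eps -> 0 < a * p a) -> `|a| < eps ->
  a * p a = 0 -> a = 0.
Proof.
move=> p_sign a_lt ap0; apply/eqP; apply: contraT => a_neq0.
by have := p_sign a; rewrite normr_gt0 a_neq0 a_lt ap0 ltxx => /(_ isT).
Qed.

Lemma connected_net_Delta (R : realType) n (E : rel 'I_n) (x : 'I_n -> R) :
  connected_net E -> (forall c d, E d c -> x d = x c) -> Delta x.
Proof.
move=> conn x_edge i j; have /connectP [p p_path ->] := conn i j.
elim: p i p_path => [|k p IHp] i //= /andP[/orP[Eik|Eki] p_path].
  by rewrite (x_edge k i Eik) IHp.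
by rewrite -(x_edge i k Eki) IHp.
Qed.

Section DistanceToDelta.
Variables (R : realType) (n : nat).

Let dist_set (x : 'I_n -> R) := [set eucl_dist x y | y in @Delta R n].

Let dist_set_lbound x : has_lbound (dist_set x).
Proof. by exists 0 => _ [y _ <-]; exact: sqrtr_ge0. Qed.

Lemma dist_Delta_le (x y : 'I_n -> R) : Delta y -> dist_Delta x <= eucl_dist x y.
Proof. by move=> Dy; apply: ge_inf; [exact: dist_set_lbound | exists y]. Qed.

Lemma dist_Delta_lt (x : 'I_n -> R) (r : R) : dist_Delta x < r ->
  exists2 y, Delta y & eucl_dist x y < r.
Proof.
have dist_set0 : dist_set x !=set0 by exists (eucl_dist x 0); exists 0.
by move=> /(inf_lt dist_set0) [_ [y Dy <-] xy_lt]; exists y.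
Qed.

End DistanceToDelta.

Lemma is_derive_sum_sqr_sub (R : realType) n (x : R -> 'I_n -> R)
    (y dx : 'I_n -> R) (t : R) :
  (forall i, is_derive t 1 (fun s => x s i) (dx i)) ->
  is_derive t 1 (fun s => \sum_i (x s i - y i) ^+ 2)
    ((\sum_i (x t i - y i) * dx i) *+ 2).
Proof.
move=> x_deriv.
have -> : (fun s => \sum_i (x s i - y i) ^+ 2) =
    \sum_(i < n) (((fun s => x s i) - cst (y i)) ^+ 2).
  by apply/funext => s; rewrite fct_sumE; apply: eq_bigr => i _; rewrite exprfctE.
apply: is_derive_eq; rewrite -sumrMnl; apply: eq_bigr => i _ /=.
rewrite subr0 [_ *: _]mulrC /= expr1.
have -> : (x^~ i - cst (y i)) t = x t i - y i by [].
rewrite -mulr_natl; ring.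
Qed.

Lemma first_crossing (R : realType) (W : R -> R) (t0 t1 K : R) :
  t0 <= t1 -> {in `[t0, t1], continuous W} -> W t0 < K -> K <= W t1 ->
  exists2 ts, t0 < ts <= t1 & K <= W ts /\ forall s, t0 <= s < ts -> W s < K.
Proof.
move=> t01 W_cont Wt0 Wt1.
set A := [set s | t0 <= s <= t1 /\ K <= W s].
have A0 : A !=set0 by exists t1; rewrite /A /= lexx t01.
have A_lb : has_lbound A by exists t0 => s [/andP[]].
set ts := inf A.
have t0_ts : t0 <= ts by apply: lb_le_inf => // s [/andP[]].
have ts_t1 : ts <= t1 by apply: ge_inf => //; rewrite /A /= lexx t01.
have below s : t0 <= s < ts -> W s < K.
  move=> /andP[t0s sts]; rewrite ltNge; apply/negP => Ks.
  have : ts <= s by apply: ge_inf => //; split => //; rewrite t0s /=; lra.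
  by rewrite leNgt sts.
(* [A] is closed, so its infimum belongs to it *)
have K_Wts : K <= W ts.
  rewrite leNgt; apply/negP => Wts.
  have ts_in : ts \in `[t0, t1] by rewrite in_itv /= t0_ts ts_t1.
  have [e e_gt0 ball_below] : nbhs_ball ts (fun t => W t < K).
    by apply/nbhs_ballP; exact: cvgr_lt (W_cont _ ts_in) _ Wts.
  have [s As ts_e] := inf_adherent e_gt0 (conj A0 A_lb).
  have ts_s : ts <= s by apply: ge_inf.
  have : W s < K by apply: ball_below; rewrite /ball /= ler0_norm; lra.
  by case: As => _ Ks; rewrite ltNge Ks.
exists ts; last by split.
rewrite ts_t1 andbT lt_neqAle t0_ts andbT; apply: contraTneq K_Wts => <-.
by rewrite -ltNge.
Qed.

Lemma le_init_of_derive_le0_below (R : realType) (W dW : R -> R) (a b t0 M : R) :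
  a < t0 < b -> (forall t, a < t < b -> is_derive t 1 W (dW t)) -> W t0 < M ->
  (forall t, a < t < b -> W t < M -> dW t <= 0) ->
  forall t, t0 <= t < b -> W t <= W t0.
Proof.
move=> /andP[a_t0 t0_b] W_deriv WM dW_le0 t1 /andP[t0_t1 t1_b].
rewrite leNgt; apply/negP => W_t1.
set K := Num.min (W t1) ((W t0 + M) / 2).
have [K_gt K_lt] : W t0 < K /\ K < M by rewrite lt_min gt_min W_t1; split; lra.
have K_le : K <= W t1 by rewrite ge_min lexx.
have in_ab s : t0 <= s <= t1 -> a < s < b.
  by move=> /andP[t0s st1]; apply/andP; split; lra.
have W_cont : {in `[t0, t1], continuous W}.
  move=> s; rewrite in_itv /= => /in_ab /W_deriv W_s.
  by apply/differentiable_continuous/derivable1_diffP; exact: ex_derive.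
have [ts /andP[t0_ts ts_t1] [K_Wts below]] :=
  first_crossing t0_t1 W_cont K_gt K_le.
have [c c_in W_mvt] : exists2 c, c \in `]t0, ts[ & W ts - W t0 = dW c * (ts - t0).
  apply: MVT => // [c|].
    by rewrite in_itv /= => /andP[t0c cts]; apply/W_deriv/in_ab; lra.
  apply: derivable_within_continuous => c.
  by rewrite in_itv /= => /andP[t0c cts]; apply/ex_derive/W_deriv/in_ab; lra.
move: c_in; rewrite in_itv /= => /andP[t0c cts].
have Wc : W c < K by apply: below; rewrite ltW.
have : dW c * (ts - t0) <= 0.
  by apply: mulr_le0_ge0; [apply: dW_le0 (lt_trans Wc K_lt); apply: in_ab | ]; lra.
rewrite -W_mvt; lra.
Qed.

Section OddBidirectedCoupling.
Variables (R : realType) (n : nat) (ET : Type).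
Variables (E : rel 'I_n) (ety : 'I_n -> 'I_n -> ET) (phi : ET -> R -> R).
Hypothesis E_bidir : bidirected E ety.
Hypothesis phi_odd :
  forall c d, E c d -> forall a, phi (ety c d) (- a) = - phi (ety c d) a.

Definition coupling_energy (x : 'I_n -> R) : R :=
  \sum_c \sum_(d < n | E d c) (x d - x c) * phi (ety c d) (x d - x c).

Lemma bidirected_symE c d : E c d = E d c.
Proof. by apply/idP/idP => /E_bidir []. Qed.

Lemma dot_diff_field_Delta (x y : 'I_n -> R) : Delta y ->
  (\sum_c (x c - y c) * diff_field E ety phi x c) *+ 2 = - coupling_energy x.
Proof.
move=> Dy.
set F := fun c d => (x c - y c) * phi (ety c d) (x d - x c).
have dotE : \sum_c (x c - y c) * diff_field E ety phi x c
    = \sum_c \sum_(d < n) (if E d c then F c d else 0).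
  by apply: eq_bigr => c _; rewrite /diff_field mulr_sumr big_mkcond.
have dot_swapE : \sum_c (x c - y c) * diff_field E ety phi x c
    = \sum_c \sum_(d < n) (if E d c then F d c else 0).
  rewrite dotE exchange_big; apply: eq_bigr => c _; apply: eq_bigr => d _.
  by rewrite bidirected_symE.
rewrite /coupling_energy mulr2n {1}dotE dot_swapE -big_split /= -sumrN.
apply: eq_bigr => c _; rewrite -big_split /= -sumrN [RHS]big_mkcond /=.
apply: eq_bigr => d _.
case: ifP => Edc; last by rewrite addr0.
have [Ecd ety_sym] := E_bidir Edc.
rewrite /F ety_sym -[x c - x d]opprB (phi_odd Ecd) (Dy d c); ring.
Qed.

Lemma diff_field_Delta (x : 'I_n -> R) c : Delta x -> diff_field E ety phi x c = 0.
Proof.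
move=> Dx; rewrite /diff_field big1 // => d Edc.
have [Ecd _] := E_bidir Edc.
by have := phi_odd Ecd 0; rewrite (Dx d c) subrr oppr0; lra.
Qed.

Variable eps : R.
Hypothesis phi_sign :
  forall c d, E c d -> forall a, 0 < `|a| < eps -> 0 < a * phi (ety c d) a.

Let edge_diff_lt (x : 'I_n -> R) c d :
  small_diffs E eps x -> E d c -> `|x d - x c| < eps /\ E c d.
Proof.
by move=> x_small /E_bidir [Ecd _]; split; [exact: x_small|].
Qed.

Lemma coupling_term_ge0 (x : 'I_n -> R) c d : small_diffs E eps x -> E d c ->
  0 <= (x d - x c) * phi (ety c d) (x d - x c).
Proof.
move=> x_small /(edge_diff_lt x_small) [lt_eps /phi_sign sign_cd].
exact: sign_mul_ge0 sign_cd lt_eps.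
Qed.

Lemma coupling_energy_ge0 (x : 'I_n -> R) : small_diffs E eps x ->
  0 <= coupling_energy x.
Proof.
by move=> x_small; do 2!apply: sumr_ge0 => ? ?; exact: coupling_term_ge0.
Qed.

Lemma coupling_energy_eq0 (x : 'I_n -> R) : small_diffs E eps x ->
  coupling_energy x = 0 -> forall c d, E d c -> x d = x c.
Proof.
move=> x_small energy0 c d Edc.
have inner_ge0 c' : 0 <= \sum_(d' < n | E d' c')
    (x d' - x c') * phi (ety c' d') (x d' - x c').
  by apply: sumr_ge0 => d' Ed'c'; exact: coupling_term_ge0.
have inner0 := psumr_eq0P (fun c' _ => inner_ge0 c') energy0 (i := c) isT.
have term0 := psumr_eq0P (fun d' => coupling_term_ge0 x_small) inner0 (i := d) Edc.
have [lt_eps /phi_sign sign_cd] := edge_diff_lt x_small Edc.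
by apply/eqP; rewrite -subr_eq0 (sign_mul_eq0 sign_cd lt_eps term0).
Qed.

Lemma dot_diff_field_le0 (x y : 'I_n -> R) : Delta y -> small_diffs E eps x ->
  (\sum_c (x c - y c) * diff_field E ety phi x c) *+ 2 <= 0.
Proof.
by move=> Dy x_small; rewrite dot_diff_field_Delta // oppr_le0 coupling_energy_ge0.
Qed.

Lemma diff_field_eq0_iff_Delta (x : 'I_n -> R) :
  connected_net E -> small_diffs E eps x ->
  (forall c, diff_field E ety phi x c = 0) <-> Delta x.
Proof.
move=> conn x_small; split => [field0|Dx c]; last exact: diff_field_Delta.
apply: connected_net_Delta conn _; apply: coupling_energy_eq0 x_small _.
apply/eqP; rewrite -oppr_eq0 -(@dot_diff_field_Delta x 0) //.
by rewrite big1 ?mul0rn // => c _; rewrite field0 mulr0.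
Qed.

Lemma cyl_forward_invariant (r : R) (a b : R) (x : R -> 'I_n -> R) :
  cyl r%:E `<=` small_diffs E eps -> a < 0 < b ->
  is_solution (diff_field E ety phi) a b x -> cyl r%:E (x 0) ->
  forall t, 0 <= t < b -> cyl r%:E (x t).
Proof.
move=> cyl_small ab sol; rewrite /cyl /= lte_fin => /dist_Delta_lt [y Dy xy_lt].
set W := fun s => \sum_i (x s i - y i) ^+ 2.
have r_gt0 : 0 < r by apply: le_lt_trans xy_lt; exact: sqrtr_ge0.
have W_ge0 s : 0 <= W s by apply: sumr_ge0 => i _; exact: sqr_ge0.
have cylW s : W s < r ^+ 2 -> cyl r%:E (x s).
  move=> Ws; rewrite /cyl /= lte_fin; apply: le_lt_trans (dist_Delta_le _ Dy) _.
  by rewrite -(gtr0_norm r_gt0) -sqrtr_sqr ltr_sqrt // exprn_gt0.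
have W0 : W 0 < r ^+ 2 by rewrite -ltr_sqrt ?exprn_gt0 // sqrtr_sqr gtr0_norm.
move=> t t_in; suff Wt : W t <= W 0 by exact: cylW (le_lt_trans Wt W0).
apply: (le_init_of_derive_le0_below ab _ W0) t_in => [s s_in|s _ Ws /=].
  by apply: is_derive_sum_sqr_sub => c; exact: sol.
exact: dot_diff_field_le0 Dy (cyl_small _ (cylW s Ws)).
Qed.

End OddBidirectedCoupling.

Theorem lemma5p2 (R : realType) (n : nat) (ET CT : Type)
  (E : rel 'I_n) (ety : 'I_n -> 'I_n -> ET) (cty : 'I_n -> CT)
  (phi : ET -> R -> R) (eps : R) (r : \bar R) :
  no_loops E -> types_compatible E ety cty ->
  connected_net E -> homogeneous E ety -> bidirected E ety ->
  (forall c d, E c d ->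
     [/\ forall a, phi (ety c d) (- a) = - phi (ety c d) a,
         forall a, derivable (phi (ety c d)) a 1
       & continuous (derive1 (phi (ety c d)))]) ->
  0 < eps ->
  (forall c d, E c d -> forall a, 0 < `|a| < eps -> 0 < a * phi (ety c d) a) ->
  largest_cyl_radius E eps r ->
  (* (i) forward invariance of Omega = cyl r *)
  (forall (a b : R) (x : R -> 'I_n -> R),
     a < 0 < b -> is_solution (diff_field E ety phi) a b x ->
     cyl r (x 0) -> forall t, 0 <= t < b -> cyl r (x t)) /\
  (* (ii) equilibria in Omega are exactly the synchronous states *)
  (forall x : 'I_n -> R, cyl r x ->
     ((forall c, diff_field E ety phi x c = 0) <-> Delta x)).
Proof.
move=> _ _ conn _ bidir phi_reg _ phi_sign [cyl_small _].
have phi_odd c d : E c d -> forall a, phi (ety c d) (- a) = - phi (ety c d) a.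
  by case/phi_reg.
split=> [a b x ab sol x0 t t_in|x x_cyl].
- case: r cyl_small x0 => [r0 | | ] cyl_small x0.
  + exact: (cyl_forward_invariant bidir phi_odd phi_sign cyl_small ab sol x0 t_in).
  + by rewrite /cyl /= ltry.
  + by move: x0; rewrite /cyl /= ltNge leNye.
- exact: (diff_field_eq0_iff_Delta bidir phi_odd phi_sign conn (cyl_small x x_cyl)).
Qed.
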